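(* Let $(\mathcal{F},\mathcal{F}_d,R)$ be a complementary justification frame, $x\in\mathcal{F}_d$, and let $\mathbb{B}$ be a branch selection for $x$. Then there exists a rule $\sim x\gets B_{\sim x}$ in $R$ such that for each $y\in\sim B_{\sim x}$, the set $\mathbb{B}_y:=\{y\to b\mid x\to y\to b\in\mathbb{B}\}$ is a branch selection for $y$.
   Context: A fact space is a set $\mathcal{F}$ containing $\mathcal{L}=\{\mathbf{t},\mathbf{f},\mathbf{u}\}$, equipped with an involution $\sim$ with $\sim\mathbf{t}=\mathbf{f}$, $\sim\mathbf{u}=\mathbf{u}$, $\sim x\ne x$ for $x\ne\mathbf{u}$; $\sim A=\{\sim a:a\in A\}$. A justification frame is $(\mathcal{F},\mathcal{F}_d,R)$ with defined facts $\mathcal{F}_d\subseteq\mathcal{F}$, $\sim\mathcal{F}_d=\mathcal{F}_d$, $\mathcal{L}\cap\mathcal{F}_d=\emptyset$, and rules $R\subseteq\mathcal{F}_d\times2^{\mathcal{F}}$ written $x\gets A$, such that each $x\in\mathcal{F}_d$ has a rule with nonempty body and no rule with empty body; open facts $\mathcal{F}_o=\mathcal{F}\setminus\mathcal{F}_d$. Let $R(x)$ be the set of bodies of rules with head $x$. A selection function for $x$ is a map $S:R(x)\to\mathcal{F}$ with $S(A)\in A$; $\mathrm{im}(S)$ is its image. The frame is complementary if for every $x\in\mathcal{F}_d$: (1) for every selection function $S$ for $x$ there is $A\in R(\sim x)$ with $A\subseteq\sim\mathrm{im}(S)$; (2) for every $A\in R(x)$ there is a selection function $S$ for $\sim x$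 with $\sim\mathrm{im}(S)\subseteq A$. A (tree-like) justification is a directed labeled forest whose internal nodes $n$ are labeled by defined facts with $\ell(n)\gets\{\ell(m):(n,m)\text{ an edge}\}\in R$; it is locally complete if no leaf is labeled by a defined fact; rooted in $x$ if a node labeled $x$ reaches all nodes. For an open fact $y$, the only locally complete justification rooted in $y$ is the single node labeled $y$ (with single branch $y$). A branch is an infinite sequence of defined facts or a finite sequence of defined facts followed by an open fact; a $J$-branch starting in $x$ is a path in $J$ from the root labeled $x$ that is infinite or ends in a leaf. A branch selection for a fact $x$ is a set $\mathbb{B}$ of branches starting in $x$ such that for each locally complete justification $J$ rooted in $x$, $\mathbb{B}$ contains at least one $J$-branch starting in $x$. *)

From Stdlib Require Import List Relations.
Import ListNotations.
Set Implicit Arguments.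

Section Defs.
Variable F : Type.

(* neg is the involution ~ ; t f u are the logical facts *)
Definition is_fact_space (neg : F -> F) (t f u : F) : Prop :=
  t <> f /\ t <> u /\ f <> u /\
  (forall x, neg (neg x) = x) /\
  neg t = f /\ neg u = u /\
  (forall x, x <> u -> neg x <> x).

(* Fd : defined facts;  R x A : the rule  x <- A  belongs to R *)
Definition is_justification_frame (neg : F -> F) (t f u : F)
    (Fd : F -> Prop) (R : F -> (F -> Prop) -> Prop) : Prop :=
  is_fact_space neg t f u /\
  (forall x, Fd x <-> Fd (neg x)) /\
  ~ Fd t /\ ~ Fd f /\ ~ Fd u /\
  (forall x A, R x A -> Fd x) /\
  (forall x, Fd x -> exists A, R x A /\ exists a, A a) /\
  (forall x A, Fd x -> R x A -> exists a, A a).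

Definition selection_function (R : F -> (F -> Prop) -> Prop) (x : F)
    (S : (F -> Prop) -> F) : Prop :=
  forall A, R x A -> A (S A).

Definition sel_image (R : F -> (F -> Prop) -> Prop) (x : F)
    (S : (F -> Prop) -> F) : F -> Prop :=
  fun b => exists A, R x A /\ S A = b.

Definition neg_set (neg : F -> F) (A : F -> Prop) : F -> Prop :=
  fun b => exists a, A a /\ b = neg a.

Definition subset (A B : F -> Prop) : Prop := forall a, A a -> B a.

Definition complementary (neg : F -> F) (Fd : F -> Prop)
    (R : F -> (F -> Prop) -> Prop) : Prop :=
  forall x, Fd x ->
    (forall S, selection_function R x S ->
       exists A, R (neg x) A /\ subset A (neg_set neg (sel_image R x S))) /\
    (forall A, R x A ->
       exists S, selection_function R (neg x) S /\
                 subset (neg_set neg (sel_image R (neg x) S)) A).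

Record justification := {
  jnode : Type;
  jedge : jnode -> jnode -> Prop;
  jlab  : jnode -> F }.

Definition is_leaf (J : justification) (n : jnode J) : Prop :=
  ~ exists m, jedge J n m.

Definition is_justification (Fd : F -> Prop) (R : F -> (F -> Prop) -> Prop)
    (J : justification) : Prop :=
  (forall m n1 n2, jedge J n1 m -> jedge J n2 m -> n1 = n2) /\
  (forall n, ~ clos_trans _ (jedge J) n n) /\
  (forall n, (exists m, jedge J n m) ->
     Fd (jlab J n) /\
     R (jlab J n) (fun b => exists m, jedge J n m /\ jlab J m = b)).

Definition locally_complete (Fd : F -> Prop) (J : justification) : Prop :=
  forall n, is_leaf J n -> ~ Fd (jlab J n).

Definition is_root (J : justification) (x : F) (r : jnode J) : Prop :=
  jlab J r = x /\ forall n, clos_refl_trans _ (jedge J) r n.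

Definition rooted_in (J : justification) (x : F) : Prop :=
  exists r, is_root J x r.

(* binf s : the infinite sequence s 0, s 1, ...
   bfin l y : the finite sequence l ++ [y] *)
Inductive branch : Type :=
| binf : (nat -> F) -> branch
| bfin : list F -> F -> branch.

Definition is_branch (Fd : F -> Prop) (b : branch) : Prop :=
  match b with
  | binf s => forall k, Fd (s k)
  | bfin l y => Forall Fd l /\ ~ Fd y
  end.

Definition bhead (b : branch) : F :=
  match b with
  | binf s => s 0
  | bfin [] y => y
  | bfin (a :: _) _ => a
  end.

Definition starts_in (Fd : F -> Prop) (b : branch) (x : F) : Prop :=
  is_branch Fd b /\ bhead b = x.

Definition branch_eq (b c : branch) : Prop :=
  match b, c with
  | binf s, binf s' => forall k, s k = s' k
  | bfin l y, bfin l' y' => l = l' /\ y = y'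
  | _, _ => False
  end.

Definition bcons (x : F) (b : branch) : branch :=
  match b with
  | binf s => binf (fun k => match k with 0 => x | S k' => s k' end)
  | bfin l y => bfin (x :: l) y
  end.

Definition is_J_branch (J : justification) (x : F) (b : branch) : Prop :=
  exists r, is_root J x r /\
  match b with
  | binf s => exists p : nat -> jnode J,
      p 0 = r /\ (forall k, jedge J (p k) (p (S k))) /\
      (forall k, s k = jlab J (p k))
  | bfin l y => exists p : nat -> jnode J,
      p 0 = r /\ (forall k, k < length l -> jedge J (p k) (p (S k))) /\
      is_leaf J (p (length l)) /\
      (forall k, k < length l -> nth_error l k = Some (jlab J (p k))) /\
      y = jlab J (p (length l))
  end.

Definition branch_selection (Fd : F -> Prop) (R : F -> (F -> Prop) -> Prop)
    (x : F) (BB : branch -> Prop) : Prop :=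
  (forall b, BB b -> starts_in Fd b x) /\
  (forall J : justification,
     is_justification Fd R J -> locally_complete Fd J -> rooted_in J x ->
     exists b, BB b /\ is_J_branch J x b).

Definition sub_selection (BB : branch -> Prop) (x y : F) : branch -> Prop :=
  fun c => bhead c = y /\ exists b, BB b /\ branch_eq b (bcons x c).

End Defs.

(* Suppose no rule ~x <- B works. Then each such B contains some ~y_B such that
   BB_{y_B} is not a branch selection, witnessed by a locally complete
   justification J_B rooted in y_B none of whose branches lies in BB_{y_B}.
   B |-> ~y_B is a selection function for ~x, so complementarity gives a rule
   x <- A with A contained in {y_B}. Grafting the J_B with y_B in A below a new
   root x yields a locally complete justification rooted in x; BB contains one of
   its branches x -> c, and c is a J_B-branch lying in BB_{y_B}. *)

From Stdlib Require Import Relations Classical ClassicalEpsilon IndefiniteDescription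
  FunctionalExtensionality PropExtensionality Eqdep Lia.

Lemma root_has_no_parent {F : Type} {Fd : F -> Prop} {R : F -> (F -> Prop) -> Prop}
    {J : justification F} {y : F} {r : jnode J} (n : jnode J) :
  is_justification Fd R J -> is_root J y r -> ~ jedge J n r.
Proof.
  intros [_ [Hacyclic _]] [_ Hreach] Hnr.
  apply (Hacyclic r). apply clos_rt_t with n; [apply Hreach | now constructor].
Qed.

Lemma J_branch_bhead {F : Type} {J : justification F} {y : F} {c : branch F} :
  is_J_branch J y c -> bhead c = y.
Proof.
  intros [r [[Hlab _] Hc]]. destruct c as [s | [|a l] z]; simpl.
  - destruct Hc as [p [<- [_ Hs]]]. now rewrite Hs.
  - destruct Hc as [p [<- [_ [_ [_ ->]]]]]. exact Hlab.
  - destruct Hc as [p [<- [_ [_ [Hl _]]]]].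
    specialize (Hl 0 (PeanoNat.Nat.lt_0_succ _)). simpl in Hl.
    now injection Hl as ->.
Qed.

Section Graft.
Context {F I : Type} {Fd : F -> Prop} {R : F -> (F -> Prop) -> Prop}.
Variables (Ji : I -> justification F) (ri : forall i, jnode (Ji i)) (x : F).
Hypothesis Hjust : forall i, is_justification Fd R (Ji i).
Hypothesis Hreach : forall i n, clos_refl_trans _ (jedge (Ji i)) (ri i) n.

Definition graft_node : Type := option {i : I & jnode (Ji i)}.

Inductive graft_edge : graft_node -> graft_node -> Prop :=
| graft_edge_root i : graft_edge None (Some (existT _ i (ri i)))
| graft_edge_inner i n m :
    jedge (Ji i) n m -> graft_edge (Some (existT _ i n)) (Some (existT _ i m)).

Definition graft_lab (p : graft_node) : F :=
  match p with
  | None => x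
  | Some (existT _ i n) => jlab (Ji i) n
  end.

Definition graft : justification F :=
  {| jnode := graft_node; jedge := graft_edge; jlab := graft_lab |}.

Lemma graft_some_inj {i n m} :
  @Some {i : I & jnode (Ji i)} (existT _ i n) = Some (existT _ i m) -> n = m.
Proof. intro E. injection E as E. exact (inj_pairT2 _ _ _ _ _ E). Qed.

Lemma graft_edge_from_top {q} : graft_edge None q -> exists i, q = Some (existT _ i (ri i)).
Proof. inversion 1. eauto. Qed.

Lemma graft_edge_from_inner {i n q} :
  graft_edge (Some (existT _ i n)) q ->
  exists m, q = Some (existT _ i m) /\ jedge (Ji i) n m.
Proof.
  intro E. remember (Some (existT _ i n)) as p eqn:Ep.
  destruct E as [j|j n' m Hnm]; [discriminate|].
  injection Ep as Ej En. subst j. apply inj_pairT2 in En. subst n'. eauto.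
Qed.

Lemma graft_edge_to_inner {p i m} :
  graft_edge p (Some (existT _ i m)) ->
  (p = None /\ m = ri i) \/ exists n, p = Some (existT _ i n) /\ jedge (Ji i) n m.
Proof.
  intro E. remember (Some (existT _ i m)) as q eqn:Eq.
  destruct E as [j|j n m' Hnm]; injection Eq as Ej Em; subst j;
    apply inj_pairT2 in Em; subst; eauto.
Qed.

Lemma graft_edge_inner_inv {i n m} :
  graft_edge (Some (existT _ i n)) (Some (existT _ i m)) -> jedge (Ji i) n m.
Proof.
  intro E. destruct (graft_edge_from_inner E) as [m' [Em Hnm]].
  now rewrite (graft_some_inj Em).
Qed.

Lemma graft_edge_to_top {p} : ~ graft_edge p None.
Proof. inversion 1. Qed.

Lemma graft_trans_to_top p : ~ clos_trans _ graft_edge p None.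
Proof.
  enough (H : forall q, clos_trans _ graft_edge p q -> q <> None) by (intro; now apply (H None)).
  induction 1 as [p q Hpq|]; [intros ->; exact (graft_edge_to_top Hpq) | assumption].
Qed.

Lemma graft_trans_inner {i n q} :
  clos_trans _ graft_edge (Some (existT _ i n)) q ->
  exists m, q = Some (existT _ i m) /\ clos_trans _ (jedge (Ji i)) n m.
Proof.
  remember (Some (existT _ i n)) as p eqn:Ep. intro Hpq. revert n Ep.
  induction Hpq as [p q Hpq|p q r _ IHpq _ IHqr]; intros n ->.
  - destruct (graft_edge_from_inner Hpq) as [m [-> Hnm]]. eauto using t_step.
  - destruct (IHpq n eq_refl) as [m [-> Hnm]].
    destruct (IHqr m eq_refl) as [k [-> Hmk]]. eauto using t_trans.
Qed.

Lemma graft_reach_inner {i n m} :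
  clos_refl_trans _ (jedge (Ji i)) n m ->
  clos_refl_trans _ graft_edge (Some (existT _ i n)) (Some (existT _ i m)).
Proof.
  induction 1; eauto using rt_step, rt_refl, rt_trans, graft_edge_inner.
Qed.

Lemma graft_reach_top {p} : clos_refl_trans _ graft_edge p None -> p = None.
Proof.
  intro H. apply clos_rt_rtn1 in H. remember None as top eqn:Etop.
  destruct H as [|q top Hq _]; [reflexivity|].
  subst top. now destruct (graft_edge_to_top Hq).
Qed.

Lemma graft_root : is_root graft x None.
Proof.
  split; [reflexivity|]. intros [[i n]|]; [|apply rt_refl].
  apply rt_trans with (Some (existT _ i (ri i))); [apply rt_step; constructor|].
  apply graft_reach_inner, Hreach.
Qed.

Lemma graft_in_degree m p1 p2 : graft_edge p1 m -> graft_edge p2 m -> p1 = p2.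
Proof.
  destruct m as [[i m]|]; [|intro E; now destruct (graft_edge_to_top E)].
  intros E1 E2.
  assert (Hnot_root : forall n, ~ jedge (Ji i) n (ri i)).
  { intro n. apply (root_has_no_parent (y := jlab (Ji i) (ri i)) n (Hjust i)).
    split; [reflexivity | apply Hreach]. }
  destruct (graft_edge_to_inner E1) as [[-> ->] | [n1 [-> Hn1]]];
    destruct (graft_edge_to_inner E2) as [[-> Em] | [n2 [-> Hn2]]]; try reflexivity.
  - now destruct (Hnot_root n2 Hn2).
  - subst m. now destruct (Hnot_root n1 Hn1).
  - destruct (Hjust i) as [Hin _]. now rewrite (Hin m n1 n2 Hn1 Hn2).
Qed.

Lemma graft_acyclic p : ~ clos_trans _ graft_edge p p.
Proof.
  destruct p as [[i n]|]; [|apply graft_trans_to_top].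
  intro Hcycle. destruct (graft_trans_inner Hcycle) as [m [Em Hnm]].
  rewrite <- (graft_some_inj Em) in Hnm. destruct (Hjust i) as [_ [Hacyclic _]].
  exact (Hacyclic n Hnm).
Qed.

Lemma graft_children_inner i n :
  (fun b => exists q, graft_edge (Some (existT _ i n)) q /\ graft_lab q = b) =
  (fun b => exists m, jedge (Ji i) n m /\ jlab (Ji i) m = b).
Proof.
  apply functional_extensionality; intro b. apply propositional_extensionality. split.
  - intros [q [E <-]]. destruct (graft_edge_from_inner E) as [m [-> Hnm]]. eauto.
  - intros [m [Hnm <-]]. exists (Some (existT _ i m)). split; [constructor|]; auto.
Qed.

Lemma graft_children_top {A : F -> Prop} :
  (forall a, A a <-> exists i, jlab (Ji i) (ri i) = a) ->
  (fun b => exists q, graft_edge None q /\ graft_lab q = b) = A.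
Proof.
  intro Hcover. apply functional_extensionality; intro b.
  apply propositional_extensionality. rewrite Hcover. split.
  - intros [q [E <-]]. destruct (graft_edge_from_top E) as [i ->]. now exists i.
  - intros [i <-]. exists (Some (existT _ i (ri i))). split; [constructor | reflexivity].
Qed.

Lemma graft_is_justification {A : F -> Prop} :
  Fd x -> R x A -> (forall a, A a <-> exists i, jlab (Ji i) (ri i) = a) ->
  is_justification Fd R graft.
Proof.
  intros Hx HA Hcover.
  split; [exact graft_in_degree | split; [exact graft_acyclic|]].
  intros [[i n]|] Hinternal; simpl.
  - destruct Hinternal as [q E]. rewrite graft_children_inner.
    destruct (graft_edge_from_inner E) as [m [_ Hnm]].
    destruct (Hjust i) as [_ [_ Hrule]]. apply Hrule. eauto.
  - rewrite (graft_children_top Hcover). auto.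
Qed.

Lemma graft_locally_complete :
  inhabited I -> (forall i, locally_complete Fd (Ji i)) -> locally_complete Fd graft.
Proof.
  intros [i0] Hcomplete [[i n]|] Hleaf.
  - apply (Hcomplete i). intros [m Hnm]. apply Hleaf.
    exists (Some (existT _ i m)). now constructor.
  - exfalso. apply Hleaf. exists (Some (existT _ i0 (ri i0))). constructor.
Qed.

(* D is the set of positions k where the path has an edge: all k for an infinite
   branch, k < length l for a finite one. *)
Lemma graft_path_descends (D : nat -> Prop) (p : nat -> graft_node) :
  (forall k, D (S k) -> D k) -> D 0 -> p 0 = None ->
  (forall k, D k -> graft_edge (p k) (p (S k))) ->
  exists i (q : nat -> jnode (Ji i)), q 0 = ri i /\
    (forall k, D k -> p (S k) = Some (existT _ i (q k))) /\
    (forall k, D (S k) -> jedge (Ji i) (q k) (q (S k))).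
Proof.
  intros Hdown HD0 Hp0 Hedge.
  assert (E0 := Hedge 0 HD0). rewrite Hp0 in E0.
  destruct (graft_edge_from_top E0) as [i Hp1].
  assert (Hstay : forall k, D k -> exists m, p (S k) = Some (existT _ i m)).
  { induction k as [|k IH]; intro Hk; [eauto|].
    destruct (IH (Hdown k Hk)) as [m Hm].
    assert (E := Hedge (S k) Hk). rewrite Hm in E.
    destruct (graft_edge_from_inner E) as [m' [Hm' _]]. eauto. }
  destruct (functional_choice (fun k m => D k -> p (S k) = Some (existT _ i m)))
    as [q Hq].
  { intro k. destruct (classic (D k)) as [Hk|Hk].
    - destruct (Hstay k Hk) as [m Hm]. eauto.
    - exists (ri i). contradiction. }
  exists i, q. split; [|split; [exact Hq|]].
  - apply graft_some_inj. now rewrite <- (Hq 0 HD0), Hp1.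
  - intros k Hk. apply graft_edge_inner_inv.
    rewrite <- (Hq k (Hdown k Hk)), <- (Hq (S k) Hk). exact (Hedge (S k) Hk).
Qed.

Lemma graft_J_branch {b} :
  inhabited I -> is_J_branch graft x b ->
  exists i c, branch_eq b (bcons x c) /\ is_J_branch (Ji i) (jlab (Ji i) (ri i)) c.
Proof.
  intros [i0] [r [[_ Hr] Hb]].
  assert (Er : r = None) by exact (graft_reach_top (Hr None)). subst r.
  assert (Hroot : forall i, is_root (Ji i) (jlab (Ji i) (ri i)) (ri i))
    by (split; [reflexivity | apply Hreach]).
  destruct b as [s | l z].
  - destruct Hb as [p [Hp0 [Hedge Hs]]].
    destruct (graft_path_descends (fun _ => True) p (fun _ h => h) Logic.I Hp0
                (fun k _ => Hedge k)) as [i [q [Hq0 [Hpq Hq]]]].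
    exists i, (binf (fun k => s (S k))). split.
    + intros [|k]; [rewrite Hs, Hp0|]; reflexivity.
    + exists (ri i). split; [apply Hroot|]. exists q.
      split; [exact Hq0 | split; [auto|]].
      intro k. rewrite Hs, Hpq; auto.
  - destruct Hb as [p [Hp0 [Hedge [Hleaf [Hl Hz]]]]].
    destruct l as [|a l].
    { exfalso. apply Hleaf. simpl. rewrite Hp0. exists (Some (existT _ i0 (ri i0))). constructor. }
    destruct (graft_path_descends (fun k => k < length (a :: l)) p
                (fun k => PeanoNat.Nat.lt_succ_l k _) (PeanoNat.Nat.lt_0_succ _) Hp0 Hedge)
      as [i [q [Hq0 [Hpq Hq]]]].
    exists i, (bfin l z). split.
    + assert (Ha := Hl 0 (PeanoNat.Nat.lt_0_succ _)). rewrite Hp0 in Ha.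
      simpl in Ha. injection Ha as ->. now split.
    + exists (ri i). split; [apply Hroot|]. exists q.
      split; [exact Hq0 | split; [|split; [|split]]].
      * intros k Hk. apply Hq. simpl. lia.
      * intros [m Hm]. apply Hleaf. simpl. rewrite Hpq by (simpl; lia).
        exists (Some (existT _ i m)). now constructor.
      * intros k Hk. assert (Hk' := Hl (S k) ltac:(simpl; lia)). simpl in Hk'.
        now rewrite Hpq in Hk' by (simpl; lia).
      * rewrite Hz. simpl. now rewrite Hpq by (simpl; lia).
Qed.

End Graft.

Definition refutes_selection {F : Type} (Fd : F -> Prop) (R : F -> (F -> Prop) -> Prop)
    (BB : branch F -> Prop) (y : F) (J : justification F) (r : jnode J) : Prop :=
  is_justification Fd R J /\ locally_complete Fd J /\ is_root J y r /\
  forall c, BB c -> ~ is_J_branch J y c.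

Lemma refuted_rule_not_branch_selection {F I : Type} {Fd : F -> Prop}
    {R : F -> (F -> Prop) -> Prop} {BB : branch F -> Prop} {x : F} {A : F -> Prop}
    {yi : I -> F} {Ji : I -> justification F} {ri : forall i, jnode (Ji i)} :
  Fd x -> R x A -> (exists a, A a) -> (forall a, A a <-> exists i, yi i = a) ->
  (forall i, refutes_selection Fd R (sub_selection BB x (yi i)) (yi i) (Ji i) (ri i)) ->
  ~ branch_selection Fd R x BB.
Proof.
  intros Hx HA [a Ha] Hcover Hrefute HBB.
  assert (Hlab : forall i, jlab (Ji i) (ri i) = yi i) by apply Hrefute.
  assert (Hreach : forall i n, clos_refl_trans _ (jedge (Ji i)) (ri i) n) by apply Hrefute.
  assert (Hinhabited : inhabited I) by (destruct (proj1 (Hcover a) Ha) as [i _]; exact (inhabits i)).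
  assert (Hlab_cover : forall a, A a <-> exists i, jlab (Ji i) (ri i) = a)
    by (intro; rewrite Hcover; now setoid_rewrite Hlab).
  destruct (proj2 HBB (graft Ji ri x)) as [b [Hb Hjb]].
  - exact (graft_is_justification Ji ri x (fun i => proj1 (Hrefute i)) Hreach Hx HA Hlab_cover).
  - apply (graft_locally_complete Ji ri x Hinhabited). apply Hrefute.
  - exists None. exact (graft_root Ji ri x Hreach).
  - destruct (graft_J_branch Ji ri x Hreach Hinhabited Hjb) as [i [c [Hbc Hc]]].
    rewrite Hlab in Hc. destruct (Hrefute i) as [_ [_ [_ Hmiss]]].
    apply (Hmiss c); [|exact Hc]. split; [exact (J_branch_bhead Hc) | eauto].
Qed.

Lemma sub_selection_starts_in {F : Type} {Fd : F -> Prop} {BB : branch F -> Prop} {x y : F} :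
  (forall b, BB b -> starts_in Fd b x) ->
  forall c, sub_selection BB x y c -> starts_in Fd c y.
Proof.
  intros Hstart c [Hc [b [Hb Hbc]]]. split; [|exact Hc].
  destruct (Hstart b Hb) as [Hbranch _].
  destruct c as [s | l z], b as [s' | l' z']; simpl in *; try contradiction.
  - intro k. rewrite <- (Hbc (S k)). apply Hbranch.
  - destruct Hbc as [-> ->]. destruct Hbranch as [Hl Hz]. now inversion Hl.
Qed.

Lemma not_branch_selection_refutation {F : Type} {Fd : F -> Prop}
    {R : F -> (F -> Prop) -> Prop} {BB : branch F -> Prop} {y : F} :
  (forall c, BB c -> starts_in Fd c y) -> ~ branch_selection Fd R y BB ->
  exists J r, refutes_selection Fd R BB y J r.
Proof.
  intros Hstart Hnot. apply NNPP; intro Hnone.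
  apply Hnot. split; [exact Hstart|]. intros J HJ Hlc [r Hr].
  apply NNPP; intro Hmiss. apply Hnone. exists J, r.
  split; [exact HJ | split; [exact Hlc | split; [exact Hr|]]].
  intros c Hc Hjc. apply Hmiss. eauto.
Qed.

Lemma complementary_rule_among_choices {F : Type} {neg : F -> F} {Fd : F -> Prop}
    {R : F -> (F -> Prop) -> Prop} {x : F} :
  (forall a, neg (neg a) = a) -> complementary neg Fd R -> Fd (neg x) ->
  forall y : {B | R (neg x) B} -> F, (forall B, neg_set neg (proj1_sig B) (y B)) ->
  exists A, R x A /\ forall a, A a -> exists B, y B = a.
Proof.
  intros Hinv Hcomp Hnx y Hy.
  set (S := fun B => match excluded_middle_informative (R (neg x) B) with
                     | left HB => neg (y (exist _ B HB))
                     | right _ => x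
                     end).
  assert (HS : selection_function R (neg x) S).
  { intros B HB. unfold S. destruct (excluded_middle_informative _) as [HB'|]; [|contradiction].
    destruct (Hy (exist _ B HB')) as [b [Hb ->]]. now rewrite Hinv. }
  destruct (proj1 (Hcomp (neg x) Hnx) S HS) as [A [HA Hsub]].
  rewrite Hinv in HA. exists A. split; [exact HA|].
  intros a Ha. destruct (Hsub a Ha) as [b [[B [HB <-]] ->]].
  unfold S. destruct (excluded_middle_informative _) as [HB'|]; [|contradiction].
  exists (exist _ B HB'). now rewrite Hinv.
Qed.

Theorem mainTheorem4 (F : Type) (neg : F -> F) (t f u : F)
    (Fd : F -> Prop) (R : F -> (F -> Prop) -> Prop)
    (Hframe : is_justification_frame neg t f u Fd R)
    (Hcomp : complementary neg Fd R)
    (x : F) (Hx : Fd x) (BB : branch F -> Prop)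
    (HBB : branch_selection Fd R x BB) :
  exists Bnx : F -> Prop, R (neg x) Bnx /\
    forall y, neg_set neg Bnx y ->
      branch_selection Fd R y (sub_selection BB x y).
Proof.
  destruct Hframe as [[_ [_ [_ [Hinv _]]]] [HFd_neg [_ [_ [_ [_ [_ Hbody]]]]]]].
  apply NNPP; intro Hnone.
  destruct (functional_choice (fun (B : {B | R (neg x) B}) y =>
      neg_set neg (proj1_sig B) y /\ ~ branch_selection Fd R y (sub_selection BB x y)))
    as [y Hy].
  { intros [B HB]. apply NNPP; intro Hall. apply Hnone. exists B. split; [exact HB|].
    intros y Hyb. apply NNPP; intro Hnot. apply Hall. eauto. }
  destruct (complementary_rule_among_choices Hinv Hcomp (proj1 (HFd_neg x) Hx) y
              (fun B => proj1 (Hy B))) as [A [HA HAy]].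
  destruct (functional_choice (fun (i : {B | A (y B)}) (Jr : {J : justification F & jnode J}) =>
      refutes_selection Fd R (sub_selection BB x (y (proj1_sig i))) (y (proj1_sig i))
        (projT1 Jr) (projT2 Jr)))
    as [Jr HJr].
  { intro i. destruct (not_branch_selection_refutation
      (sub_selection_starts_in (proj1 HBB)) (proj2 (Hy (proj1_sig i)))) as [J [r HJ]].
    now exists (existT _ J r). }
  refine (refuted_rule_not_branch_selection Hx HA (Hbody x A Hx HA) _ HJr HBB).
  intro a. split.
  - intro Ha. destruct (HAy a Ha) as [B <-]. now exists (exist _ B Ha).
  - intros [i <-]. exact (proj2_sig i).
Qed.
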